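(* Let $A_1,A_2\in\mathcal{C}^{\mathrm{geo}}$ and let $B=A_1\cap A_2$ be a common induced substructure of $A_1$ and $A_2$ such that $B\le A_1$. Let $D$ be the geometric amalgam of $A_1$ and $A_2$ over $B$. Then $D\in\mathcal{C}^{\mathrm{geo}}$.
   Context: Fix a natural number $n$ and a symmetric irreflexive $n$-ary relation symbol $S$; all substructures are induced substructures. For an $\{S\}$-structure $A$, a set $K\subseteq A$ with $|K|\ge n$ is a clique if every $n$-element subset of $K$ (as a tuple of distinct elements in any order) lies in $S^A$; it is a maximal clique if no clique of $A$ properly contains it. $\mathcal{M}(A)$ denotes the set of maximal cliques of $A$. For a finite set $X$ put $|X|_*=\max\{0,|X|-(n-1)\}$. For a finite $\{S\}$-structure $A$ put $s(A)=\sum_{K\in\mathcal{M}(A)}|K|_*$ and $\delta_s(A)=|A|-s(A)$. For finite $B\subseteq A$, $\delta_s(A/B)=\delta_s(A)-\delta_s(B)$. Write $B\le A$ if $\delta_s(X/B)\ge 0$ for every finite $X$ with $B\subseteq X\subseteq A$. An $\{S\}$-structure $A$ is geometric if whenever $X\subseteq A$ with $|X|\ge n$ and $\delta_s(X)<n$, there is a unique $K\in\mathcal{M}(A)$ with $X\subseteq K$. $\mathcal{C}^{\mathrm{geo}}$ is the class of finite geometric $\{S\}$-structures. For $A_1,A_2\in\mathcal{C}^{\mathrm{geo}}$ with $B=A_1\cap A_2$ a common induced substructure, the geometric amalgam of $A_1$ and $A_2$ over $B$ is the unique $\{S\}$-structure $D$ with universe $A_1\cup A_2$ whose set of maximal cliques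 is $M\cup M_1\cup M_2$, where $M=\{K_1\cup K_2: K_1\in\mathcal{M}(A_1),K_2\in\mathcal{M}(A_2),|K_1\cap K_2|\ge n-1\}$, $M_1=\{K\in\mathcal{M}(A_1):|K\cap L|<n-1\text{ for all }L\in\mathcal{M}(A_2)\}$, and $M_2=\{K\in\mathcal{M}(A_2):|K\cap L|<n-1\text{ for all }L\in\mathcal{M}(A_1)\}$ (i.e. $S^D$ is the set of $n$-tuples of distinct elements whose underlying set is contained in one of these sets). *)

From HB Require Import structures.
From mathcomp Require Import all_boot all_order all_algebra.
Set Implicit Arguments. Unset Strict Implicit. Unset Printing Implicit Defensive.
Import Order.TTheory GRing.Theory Num.Theory.

(* All structures live inside an ambient finite type T.  A finite
   {S}-structure is a universe A : {set T} together with the interpretation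
   S : pred (n.-tuple T) of the n-ary relation symbol.  Induced substructures
   on X \subset A are (X, S) (the relation is just restricted). *)

Section Geo.
Variables (n : nat) (T : finType).

Definition is_structure (A : {set T}) (S : pred (n.-tuple T)) : Prop :=
  [/\ forall t, S t -> all (fun x => x \in A) t,
      forall t t' : n.-tuple T, perm_eq t t' -> S t = S t'
    & forall t, S t -> uniq t].

Definition clique (S : pred (n.-tuple T)) (X K : {set T}) : bool :=
  [&& K \subset X, n <= #|K| &
      [forall t : n.-tuple T, (uniq t && all (fun x => x \in K) t) ==> S t]].

Definition maxclique (S : pred (n.-tuple T)) (X K : {set T}) : bool :=
  clique S X K && ~~ [exists K' : {set T}, clique S X K' && (K \proper K')].

(* |K|_* = max(0, |K| - (n-1)) *)
Definition star (K : {set T}) : nat := (#|K|.+1 - n)%N.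

Definition s_fun (S : pred (n.-tuple T)) (X : {set T}) : nat :=
  (\sum_(K : {set T} | maxclique S X K) star K)%N.

Definition delta (S : pred (n.-tuple T)) (X : {set T}) : int :=
  (#|X|%:Z - (s_fun S X)%:Z)%R.

Definition le_s (S : pred (n.-tuple T)) (B A : {set T}) : Prop :=
  forall X : {set T}, B \subset X -> X \subset A ->
    (0 <= delta S X - delta S B)%R.

Definition geometric (S : pred (n.-tuple T)) (A : {set T}) : Prop :=
  forall X : {set T}, X \subset A -> n <= #|X| -> (delta S X < n%:Z)%R ->
    exists! K : {set T}, maxclique S A K /\ X \subset K.

Definition amalgM (A1 : {set T}) (S1 : pred (n.-tuple T))
    (A2 : {set T}) (S2 : pred (n.-tuple T)) (K : {set T}) : bool :=
  [exists K1 : {set T}, exists K2 : {set T},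
     [&& maxclique S1 A1 K1, maxclique S2 A2 K2,
         n.-1 <= #|K1 :&: K2| & K == K1 :|: K2]].

Definition amalgM1 (A1 : {set T}) (S1 : pred (n.-tuple T))
    (A2 : {set T}) (S2 : pred (n.-tuple T)) (K : {set T}) : bool :=
  maxclique S1 A1 K &&
  [forall L : {set T}, maxclique S2 A2 L ==> (#|K :&: L| < n.-1)].

Definition amalgM2 (A1 : {set T}) (S1 : pred (n.-tuple T))
    (A2 : {set T}) (S2 : pred (n.-tuple T)) (K : {set T}) : bool :=
  maxclique S2 A2 K &&
  [forall L : {set T}, maxclique S1 A1 L ==> (#|K :&: L| < n.-1)].

(* relation S^D of the geometric amalgam D (universe A1 :|: A2) *)
Definition amalgam (A1 : {set T}) (S1 : pred (n.-tuple T))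
    (A2 : {set T}) (S2 : pred (n.-tuple T)) : pred (n.-tuple T) :=
  fun t => uniq t &&
    [exists K : {set T},
       [|| amalgM A1 S1 A2 S2 K, amalgM1 A1 S1 A2 S2 K | amalgM2 A1 S1 A2 S2 K]
       && all (fun x => x \in K) t].

End Geo.

(* The maximal cliques of a geometric structure pairwise meet in fewer than n - 1 points, so
   s(X) is the sum of |L :&: X|_* over them.  Using B <= A1, the maximal cliques of the
   amalgam D have the same property, so uniqueness is automatic and it remains to show
   delta(X) >= n for every X with |X| >= n contained in no maximal clique of D.  We induct
   on |D \ X|.  If a maximal clique L meets X in n - 1 points but L :&: B is not inside X,
   adding a point of L :&: B raises |X| and s(X) by one each.  Otherwise s is submodular
   along X = (X :&: A1) :|: (X :&: A2), B <= A1 gives delta(X :&: B) <= delta(X :&: A1),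
   and geometricity of A1 and A2 bounds delta(X :&: A1) and delta(X :&: A2) from below. *)

From HB Require Import structures.
From mathcomp Require Import all_boot all_order all_algebra.
From mathcomp Require Import zify.
Set Implicit Arguments. Unset Strict Implicit. Unset Printing Implicit Defensive.

Section Cliques.
Variables (n : nat) (T : finType).
Implicit Types (S : pred (n.-tuple T)) (A X Y K L : {set T}).

Definition complete S K :=
  [forall t : n.-tuple T, (uniq t && all (fun x => x \in K) t) ==> S t].

Lemma cliqueE S X K : clique S X K = [&& K \subset X, n <= #|K| & complete S K].
Proof. by []. Qed.

Lemma complete_sub S K K' : K' \subset K -> complete S K -> complete S K'.
Proof.
move=> sK'K /forallP okK; apply/forallP => t; apply/implyP => /andP[ut /allP tK'].
apply: (implyP (okK t)); rewrite ut; apply/allP => x /tK'; exact: (subsetP sK'K).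
Qed.

Lemma exists_subset_card A k : k <= #|A| -> exists2 B : {set T}, B \subset A & #|B| = k.
Proof.
case/card_geqP => s [us <- sA]; exists [set x in s].
  by apply/subsetP => x; rewrite inE => /sA.
by rewrite cardsE (card_uniqP us).
Qed.

Lemma complete_tuple S K Y : complete S K -> Y \subset K -> #|Y| = n ->
  exists t : n.-tuple T, S t /\ t =i Y.
Proof.
move=> /forallP okK sYK cY; have sz : size (enum Y) == n by rewrite -cardE cY.
exists (Tuple sz); split; last by move=> x; rewrite mem_enum.
apply: (implyP (okK _)); rewrite enum_uniq; apply/allP => x /=.
by rewrite mem_enum => /(subsetP sYK).
Qed.

Lemma maxclique_clique S X K : maxclique S X K -> clique S X K.
Proof. by case/andP. Qed.

Lemma maxclique_sub S X K : maxclique S X K -> K \subset X.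
Proof. by case/andP => /and3P[]. Qed.

Lemma maxclique_card S X K : maxclique S X K -> n <= #|K|.
Proof. by case/andP => /and3P[]. Qed.

Lemma maxclique_complete S X K : maxclique S X K -> complete S K.
Proof. by case/andP => /and3P[]. Qed.

Lemma maxclique_exists S X K : clique S X K -> exists2 M, maxclique S X M & K \subset M.
Proof.
move=> cK; pose P M := clique S X M && (K \subset M).
have [M /andP[cM sKM] maxM] := @arg_maxnP _ K P (fun M => #|M|) (introT andP (conj cK (subxx K))).
exists M => //; apply/andP; split=> //; apply/existsP => -[M' /andP[cM' ltMM']].
have := maxM M'; rewrite /P cM' (subset_trans sKM (proper_sub ltMM')) => /(_ isT).
by rewrite /= leqNgt proper_card.
Qed.

Lemma maxclique_not_subset S X K L : maxclique S X K -> maxclique S X L -> K != L ->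
  exists2 x, x \in K & x \notin L.
Proof.
move=> /andP[_ /existsP maxK] mL neqKL; apply/subsetPn/negP => sKL; apply: maxK.
by exists L; rewrite (maxclique_clique mL) properEneq neqKL.
Qed.

Lemma s_fun_clique S X : clique S X X -> s_fun S X = star n X.
Proof.
move=> cX; rewrite /s_fun (eq_bigl (pred1 X)) ?big_pred1_eq // => K /=.
apply/idP/eqP => [/andP[/and3P[sKX _ _] /existsP maxK] | ->].
  by apply/eqP; rewrite eqEproper sKX; apply: contra_notN maxK => ltKX; exists X; rewrite cX.
rewrite /maxclique cX; apply/existsP => -[K' /andP[/and3P[sK'X _ _]]].
by rewrite properE sK'X andbF.
Qed.

Lemma maxclique_nsubset S X Y : Y \subset X -> #|Y| = n -> complete S Y ->
  #|X| = n.+1 -> ~~ complete S X -> maxclique S X Y.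
Proof.
move=> sYX cY okY cX nokX; rewrite /maxclique cliqueE sYX cY leqnn okY /=.
apply/existsP => -[K /andP[/and3P[sKX _ okK] ltYK]].
have eKX : K = X by apply/eqP; rewrite eqEcard sKX cX; move: (proper_card ltYK); rewrite cY.
by move: nokX; rewrite -eKX /complete okK.
Qed.

Lemma delta_ltn S X : (delta S X < n%:Z)%R = (#|X| < n + s_fun S X).
Proof. by rewrite /delta; apply/idP/idP; lia. Qed.

End Cliques.

Section Families.
Variables (n : nat) (T : finType).
Implicit Types (S : pred (n.-tuple T)) (A X Y K L P : {set T}) (G H : {set {set T}}).

Definition covered G K := [exists L in G, K \subset L].

Definition small_meets G :=
  forall L L', L \in G -> L' \in G -> L != L' -> #|L :&: L'| < n.-1.

Definition clique_cover S Y G :=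
  forall K, clique S Y K = [&& K \subset Y, n <= #|K| & covered G K].

Definition sigma G Y := \sum_(L in G) star n (L :&: Y).

Definition maxcliques S A := [set K | maxclique S A K].

Lemma coveredP G K : reflect (exists2 L, L \in G & K \subset L) (covered G K).
Proof. exact: exists_inP. Qed.

Lemma small_meets_eq G L L' Y : small_meets G -> L \in G -> L' \in G ->
  Y \subset L -> Y \subset L' -> n.-1 <= #|Y| -> L = L'.
Proof.
move=> smG LG L'G sYL sYL' cY; apply/eqP; apply: contraLR cY => neqLL'.
rewrite -ltnNge (leq_ltn_trans _ (smG _ _ LG L'G neqLL')) //.
by rewrite subset_leq_card // subsetI sYL.
Qed.

Lemma maxclique_cover S Y G : small_meets G -> clique_cover S Y G ->
  forall K, maxclique S Y K = [exists L in G, (n <= #|L :&: Y|) && (K == L :&: Y)].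
Proof.
move=> smG clG K; rewrite /maxclique clG; apply/idP/idP.
- case/andP => /and3P[sKY nK /coveredP[L LG sKL]] /existsP maxK.
  apply/exists_inP; exists L => //.
  have sKLY : K \subset L :&: Y by rewrite subsetI sKL sKY.
  case: (eqVneq K (L :&: Y)) => [<-|neqK]; first by rewrite nK.
  case: maxK; exists (L :&: Y); rewrite properEneq neqK sKLY clG subsetIr.
  rewrite (leq_trans nK (subset_leq_card sKLY)) /= andbT.
  by apply/coveredP; exists L; rewrite ?subsetIl.
- case/exists_inP => L LG /andP[nL /eqP ->].
  rewrite subsetIr nL; apply/andP; split; first by apply/coveredP; exists L; rewrite ?subsetIl.
  apply/existsP => -[K' /andP[]]; rewrite clG => /and3P[sK'Y nK' /coveredP[L' L'G sK'L']] ltK'.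
  have sLY : L :&: Y \subset L' := subset_trans (proper_sub ltK') sK'L'.
  have eLL' := small_meets_eq smG LG L'G (subsetIl L Y) sLY (leq_trans (leq_pred n) nL).
  by move: ltK'; rewrite properE subsetI eLL' sK'L' sK'Y andbF.
Qed.

Lemma s_fun_cover S Y G : small_meets G -> clique_cover S Y G -> s_fun S Y = sigma G Y.
Proof.
move=> smG clG; pose G' := [set L in G | n <= #|L :&: Y|].
rewrite /s_fun (eq_bigl (mem [set L :&: Y | L in G'])); last first.
  move=> K; rewrite (maxclique_cover smG clG) /=; apply/exists_inP/imsetP.
    by case=> L LG /andP[nL /eqP ->]; exists L; rewrite // inE LG.
  by case=> L; rewrite inE => /andP[LG nL] ->; exists L; rewrite // nL eqxx.
rewrite big_imset /=; last first.
  move=> L L'; rewrite !inE => /andP[LG nL] /andP[L'G _] eLL'.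
  apply: small_meets_eq smG LG L'G (subsetIl L Y) _ (leq_trans (leq_pred n) nL).
  by rewrite eLL' subsetIl.
rewrite /sigma [RHS](bigID (fun L => n <= #|L :&: Y|)) /= [X in _ + X]big1 ?addn0.
  by apply: eq_bigl => L; rewrite inE.
by move=> L /andP[_]; rewrite -ltnNge /star => ltLY; apply/eqP; rewrite subn_eq0.
Qed.

Lemma clique_cover_maxcliques S A Y : Y \subset A -> clique_cover S Y (maxcliques S A).
Proof.
move=> sYA K; rewrite !cliqueE; case sKY: (K \subset Y) => //=.
case nK: (n <= #|K|) => //=; apply/idP/coveredP => [okK | [L]].
  have cK : clique S A K by rewrite cliqueE (subset_trans sKY sYA) nK.
  by have [M mM sKM] := maxclique_exists cK; exists M; rewrite ?inE.
by rewrite inE => mL sKL; exact: complete_sub sKL (maxclique_complete mL).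
Qed.

Lemma s_fun_cover_eq S S' Y G G' : clique_cover S Y G -> clique_cover S' Y G' ->
  (forall K, K \subset Y -> n <= #|K| -> covered G K = covered G' K) ->
  s_fun S Y = s_fun S' Y.
Proof.
move=> clG clG' eqG; have eq_clique K : clique S Y K = clique S' Y K.
  rewrite clG clG'; case sKY: (K \subset Y) => //=; case nK: (n <= #|K|) => //=.
  exact: eqG.
apply: eq_bigl => K; rewrite /maxclique eq_clique; congr (_ && ~~ _).
by apply: eq_existsb => K'; rewrite eq_clique.
Qed.

(* Pointwise this is the convexity of m |-> m.+1 - n. *)
Lemma sigma_supermodular G X Y :
  sigma G X + sigma G Y <= sigma G (X :|: Y) + sigma G (X :&: Y).
Proof.
rewrite /sigma -!big_split; apply: leq_sum => L _ /=; rewrite /star.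
have := cardsUI (L :&: X) (L :&: Y); rewrite -setIUr setIACA setIid.
have := subset_leq_card (setIS L (subsetIl X Y)).
have := subset_leq_card (setIS L (subsetIr X Y)).
lia.
Qed.

Lemma sigma_grow G H Y P : H \subset G -> [disjoint P & Y] ->
  (forall L, L \in H -> P \subset L /\ n.-1 <= #|L :&: Y|) ->
  sigma G Y + #|H| * #|P| <= sigma G (Y :|: P).
Proof.
move=> sHG dPY HP; pose f L := star n (L :&: (Y :|: P)) - star n (L :&: Y).
have -> : sigma G (Y :|: P) = sigma G Y + \sum_(L in G) f L.
  rewrite /sigma -big_split; apply: eq_bigr => L _ /=; rewrite subnKC //.
  by rewrite leq_sub2r // ltnS subset_leq_card // setIS // subsetUl.
rewrite leq_add2l -sum_nat_const [X in _ <= X](big_setID H) (setIidPr sHG) /=.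
apply: leq_trans (leq_addr _ _); apply: leq_sum => L /HP[sPL cLY].
have dLYP : [disjoint L :&: Y & P] by rewrite disjoint_sym (disjointWr (subsetIr L Y)).
have := cardsUI (L :&: Y) P; rewrite (disjoint_setI0 dLYP) cards0 addn0.
by rewrite /f /star setIUr (setIidPr sPL); lia.
Qed.

Hypothesis n_gt0 : 0 < n.

(* Two n-subsets of K differing in one point share n - 1 points, hence lie in the same member. *)
Lemma covered_of_nsubsets G K : small_meets G -> n <= #|K| ->
  (forall Y, Y \subset K -> #|Y| = n -> covered G Y) -> covered G K.
Proof.
move=> smG nK covK; have [Y sYK cY] := exists_subset_card nK.
have /coveredP[L LG sYL] := covK _ sYK cY.
apply/coveredP; exists L => //; apply/subsetP => p pK.
have [Z sZY cZ] : exists2 Z : {set T}, Z \subset Y & #|Z| = n.-1.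
  by apply: exists_subset_card; rewrite cY leq_pred.
case: (boolP (p \in Z)) => [pZ | pnZ]; first exact: subsetP sYL p (subsetP sZY p pZ).
have sZpK : p |: Z \subset K by rewrite subUset sub1set pK (subset_trans sZY sYK).
have cZp : #|p |: Z| = n by rewrite cardsU1 pnZ cZ add1n prednK.
have /coveredP[L' L'G sZpL'] := covK _ sZpK cZp.
have sZL' : Z \subset L' := subset_trans (subsetUr _ _) sZpL'.
rewrite (small_meets_eq smG LG L'G (subset_trans sZY sYL) sZL'); last by rewrite cZ.
by apply: (subsetP sZpL'); rewrite !inE eqxx.
Qed.

Lemma clique_cover_of_rel S G Y : small_meets G ->
  (forall t, S t = uniq t && [exists L in G, all (fun x => x \in L) t]) ->
  clique_cover S Y G.
Proof.
move=> smG SE K; rewrite cliqueE; case sKY: (K \subset Y) => //=.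
case nK: (n <= #|K|) => //=; apply/idP/idP => [okK | /coveredP[L LG sKL]].
  apply: covered_of_nsubsets => // Z sZK cZ.
  have [t [St tZ]] := complete_tuple okK sZK cZ.
  move: St; rewrite SE => /andP[_ /exists_inP[L LG /allP tL]].
  by apply/coveredP; exists L => //; apply/subsetP => x; rewrite -tZ => /tL.
apply/forallP => t; apply/implyP => /andP[ut /allP tK]; rewrite SE ut.
by apply/exists_inP; exists L => //; apply/allP => x /tK /(subsetP sKL).
Qed.

Lemma sigma_small G Y : #|Y| <= n.-1 -> sigma G Y = 0.
Proof.
move=> cY; rewrite /sigma big1 // => L _; apply/eqP; rewrite /star subn_eq0.
have := subset_leq_card (subsetIr L Y); lia.
Qed.

Lemma sigma_member G L Y : small_meets G -> L \in G -> Y \subset L -> n.-1 <= #|Y| ->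
  sigma G Y + n.-1 = #|Y|.
Proof.
move=> smG LG sYL cY; rewrite /sigma (bigD1 L LG) /= (setIidPr sYL) big1 ?addn0.
  by rewrite /star; lia.
move=> L' /andP[L'G neqL']; apply/eqP; rewrite /star subn_eq0.
have := smG _ _ L'G LG neqL'; have := subset_leq_card (setIS L' sYL); lia.
Qed.

End Families.

Section Geometric.
Variables (n : nat) (T : finType).
Hypothesis n_gt0 : 0 < n.
Variables (S : pred (n.-tuple T)) (A : {set T}).
Hypothesis geoS : geometric S A.
Implicit Types (B X Y K L : {set T}).

Lemma geometric_uncovered Y : Y \subset A -> n <= #|Y| ->
  ~~ covered (maxcliques S A) Y -> n + s_fun S Y <= #|Y|.
Proof.
move=> sYA nY; apply: contraR; rewrite -ltnNge -delta_ltn => ltY.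
have [M [[mM sYM] _]] := geoS sYA nY ltY.
by apply/coveredP; exists M; rewrite ?inE.
Qed.

Lemma geometric_unique_complete Y : Y \subset A -> #|Y| = n -> complete S Y ->
  exists! M, maxclique S A M /\ Y \subset M.
Proof.
move=> sYA cY okY; apply: geoS => //; first by rewrite cY.
have cl : clique S Y Y by rewrite cliqueE subxx cY leqnn okY.
by rewrite delta_ltn (s_fun_clique cl) /star cY; lia.
Qed.

(* Two distinct complete n-subsets are two maximal cliques of X, so delta(X) <= n - 1. *)
Lemma geometric_complete_succ X Y1 Y2 : X \subset A -> #|X| = n.+1 ->
  Y1 \subset X -> Y2 \subset X -> Y1 != Y2 -> #|Y1| = n -> #|Y2| = n ->
  complete S Y1 -> complete S Y2 -> complete S X.
Proof.
move=> sXA cX sY1X sY2X neqY cY1 cY2 okY1 okY2; apply: contraT => nokX.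
have m1 := maxclique_nsubset sY1X cY1 okY1 cX nokX.
have m2 := maxclique_nsubset sY2X cY2 okY2 cX nokX.
have sX : 2 <= s_fun S X.
  rewrite /s_fun (bigD1 Y1) //= (bigD1 Y2) /=; last by rewrite m2 eq_sym neqY.
  by rewrite /star cY1 cY2 subSnn addnA leq_addr.
have [M [[mM sXM] _]] : exists! M, maxclique S A M /\ X \subset M.
  by apply: geoS; rewrite // ?delta_ltn cX; lia.
by rewrite (complete_sub sXM (maxclique_complete mM)) in nokX.
Qed.

(* Otherwise take x in K only, y in L only and n - 1 common points Z: then y |: (x |: Z) is
   complete, so x |: Z lies in K and in a maximal clique containing y. *)
Lemma geometric_small_meets : small_meets n (maxcliques S A).
Proof.
move=> K L; rewrite !inE => mK mL neqKL; rewrite ltnNge; apply/negP => cKL.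
have [x xK xnL] := maxclique_not_subset mK mL neqKL.
have [y yL ynK] : exists2 y, y \in L & y \notin K.
  by apply: maxclique_not_subset mL mK _; rewrite eq_sym.
have [Z sZ cZ] := exists_subset_card cKL.
have [sZK sZL] := (subset_trans sZ (subsetIl K L), subset_trans sZ (subsetIr K L)).
have xnZ : x \notin Z by apply: contra xnL; apply: subsetP.
have ynZ : y \notin Z by apply: contra ynK; apply: subsetP.
have ynxZ : y \notin x |: Z by rewrite !inE negb_or ynZ andbT; apply: contraNneq ynK => ->.
have sxZK : x |: Z \subset K by rewrite subUset sub1set xK.
have syZL : y |: Z \subset L by rewrite subUset sub1set yL.
have cxZ : #|x |: Z| = n by rewrite cardsU1 xnZ cZ add1n prednK.
have cyZ : #|y |: Z| = n by rewrite cardsU1 ynZ cZ add1n prednK.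
have sXA : y |: (x |: Z) \subset A.
  rewrite subUset sub1set (subsetP (maxclique_sub mL)) //.
  exact: subset_trans sxZK (maxclique_sub mK).
have okX : complete S (y |: (x |: Z)).
  apply: (geometric_complete_succ sXA _ (subsetUr _ _) _ _ cxZ cyZ).
  - by rewrite cardsU1 ynxZ cxZ.
  - by rewrite setUS // subsetUr.
  - by apply: contraNneq ynxZ => ->; rewrite setU11.
  - exact: complete_sub sxZK (maxclique_complete mK).
  - exact: complete_sub syZL (maxclique_complete mL).
have [M mM sXM] : exists2 M, maxclique S A M & y |: (x |: Z) \subset M.
  by apply: maxclique_exists; rewrite cliqueE sXA okX cardsU1 ynxZ cxZ leqW.
have [M0 [_ uniqM]] := geometric_unique_complete (subset_trans sxZK (maxclique_sub mK)) cxZ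
  (complete_sub sxZK (maxclique_complete mK)).
have eKM : K = M by rewrite -(uniqM K) ?(uniqM M) // (subset_trans (subsetUr _ _) sXM).
by move: ynK; rewrite eKM (subsetP sXM) // setU11.
Qed.

Lemma s_fun_geometric Y : Y \subset A -> s_fun S Y = sigma n (maxcliques S A) Y.
Proof.
by move=> sYA; apply: s_fun_cover geometric_small_meets (clique_cover_maxcliques _ sYA).
Qed.

Lemma le_s_meet B X : B \subset A -> le_s S B A -> X \subset A ->
  #|X :&: B| + s_fun S X <= #|X| + s_fun S (X :&: B).
Proof.
move=> sBA leBA sXA; have sXBA : X :|: B \subset A by rewrite subUset sXA.
have := leBA _ (subsetUr X B) sXBA; rewrite /delta => deltaB.
have := sigma_supermodular n (maxcliques S A) X B.
rewrite -!s_fun_geometric // ?(subset_trans (subsetIl X B) sXA) //.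
have := cardsUI X B; lia.
Qed.

End Geometric.

Definition agree_on n (T : finType) (B : {set T}) (S S' : pred (n.-tuple T)) :=
  forall t : n.-tuple T, all (fun x => x \in B) t -> S t = S' t.

Lemma agree_onC n (T : finType) (A1 A2 : {set T}) (S1 S2 : pred (n.-tuple T)) :
  agree_on (A1 :&: A2) S1 S2 -> agree_on (A2 :&: A1) S2 S1.
Proof. by move=> agr t; rewrite setIC => /agr. Qed.

Definition amalg_cliques n (T : finType) (A1 : {set T}) (S1 : pred (n.-tuple T))
    (A2 : {set T}) (S2 : pred (n.-tuple T)) : {set {set T}} :=
  [set K | [|| amalgM A1 S1 A2 S2 K, amalgM1 A1 S1 A2 S2 K | amalgM2 A1 S1 A2 S2 K]].

Section Amalgam.
Variables (n : nat) (T : finType) (A1 A2 : {set T}) (S1 S2 : pred (n.-tuple T)).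
Implicit Types (K L : {set T}).

Local Notation F := (amalg_cliques A1 S1 A2 S2).

Lemma amalgamE t : amalgam A1 S1 A2 S2 t = uniq t && [exists L in F, all (fun x => x \in L) t].
Proof. by congr (_ && _); apply: eq_existsb => K; rewrite inE. Qed.

Lemma amalg_cliquesC : amalg_cliques A2 S2 A1 S1 = F.
Proof.
apply/setP => K; rewrite !inE; have -> : amalgM A2 S2 A1 S1 K = amalgM A1 S1 A2 S2 K.
  by apply/existsP/existsP => -[Ka /existsP[Kb /and4P[ma mb le /eqP ->]]];
    exists Kb; apply/existsP; exists Ka; rewrite ma mb setIC le setUC /=.
by rewrite /amalgM1 /amalgM2; case: (amalgM _ _ _ _ _) => //=; rewrite orbC.
Qed.

Variant amalg_cliques_spec L : Prop :=
  | AmalgUnion K1 K2 of maxclique S1 A1 K1 & maxclique S2 A2 K2 &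
      n.-1 <= #|K1 :&: K2| & L = K1 :|: K2
  | AmalgLeft of maxclique S1 A1 L &
      (forall K2, maxclique S2 A2 K2 -> #|L :&: K2| < n.-1)
  | AmalgRight of maxclique S2 A2 L &
      (forall K1, maxclique S1 A1 K1 -> #|L :&: K1| < n.-1).

Lemma amalg_cliquesP L : L \in F -> amalg_cliques_spec L.
Proof.
rewrite inE => /or3P[/existsP[K1 /existsP[K2 /and4P[m1 m2 le /eqP ->]]]|/andP[m1]|/andP[m2]].
- exact: AmalgUnion m1 m2 le _.
- by move=> /forallP sm; apply: AmalgLeft => // K2 m2; apply: (implyP (sm K2)).
- by move=> /forallP sm; apply: AmalgRight => // K1 m1; apply: (implyP (sm K1)).
Qed.

Lemma amalg_cliques_union K1 K2 : maxclique S1 A1 K1 -> maxclique S2 A2 K2 ->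
  n.-1 <= #|K1 :&: K2| -> K1 :|: K2 \in F.
Proof.
by move=> m1 m2 le; rewrite inE; apply/or3P/Or31/existsP; exists K1; apply/existsP; exists K2;
  rewrite m1 m2 le eqxx.
Qed.

Lemma amalg_cliques_left K1 : maxclique S1 A1 K1 ->
  (forall K2, maxclique S2 A2 K2 -> #|K1 :&: K2| < n.-1) -> K1 \in F.
Proof.
by move=> m1 sm; rewrite inE; apply/or3P/Or32; rewrite /amalgM1 m1; apply/forall_inP.
Qed.

End Amalgam.

Section Matching.
Variables (n : nat) (T : finType).
Hypothesis n_gt0 : 0 < n.
Variables (Aa Ab : {set T}) (Sa Sb : pred (n.-tuple T)).
Hypothesis geob : geometric Sb Ab.
Hypothesis agree : agree_on (Aa :&: Ab) Sa Sb.
Implicit Types (K Ka Kb : {set T}).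

Lemma complete_agree K : K \subset Aa :&: Ab -> complete Sa K = complete Sb K.
Proof.
move=> sK; apply: eq_forallb => t; case: (uniq t) => //=.
case tK: (all _ t) => //=; rewrite agree //.
by apply/allP => x /(allP tK) /(subsetP sK).
Qed.

(* If it has n points, Ka :&: Ab is a clique of Ab sharing n - 1 points with Kb. *)
Lemma matched_sub Ka Kb : maxclique Sa Aa Ka -> maxclique Sb Ab Kb ->
  n.-1 <= #|Ka :&: Kb| -> Ka :&: Ab \subset Kb.
Proof.
move=> ma mb le; have sI : Ka :&: Kb \subset Ka :&: Ab by rewrite setIS // (maxclique_sub mb).
case: (leqP n #|Ka :&: Ab|) => [nK | ltK]; last first.
  have <- : Ka :&: Kb = Ka :&: Ab.
    by apply/eqP; rewrite eqEcard sI /=; move: (subset_leq_card sI); lia.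
  exact: subsetIr.
have okK : complete Sb (Ka :&: Ab).
  rewrite -complete_agree ?setSI ?(maxclique_sub ma) //.
  exact: complete_sub (subsetIl _ _) (maxclique_complete ma).
have [Kb' mb' sK'] : exists2 M, maxclique Sb Ab M & Ka :&: Ab \subset M.
  by apply: maxclique_exists; rewrite cliqueE subsetIr nK okK.
suff -> : Kb = Kb' by [].
apply: (small_meets_eq (geometric_small_meets n_gt0 geob) (Y := Ka :&: Kb));
  by rewrite ?inE ?subsetIr // (subset_trans sI sK').
Qed.

Lemma matched_uniq Ka Kb Kb' : maxclique Sa Aa Ka -> maxclique Sb Ab Kb ->
  maxclique Sb Ab Kb' -> n.-1 <= #|Ka :&: Kb| -> n.-1 <= #|Ka :&: Kb'| -> Kb = Kb'.
Proof.
move=> ma mb mb' le le'; apply: (small_meets_eq (geometric_small_meets n_gt0 geob)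
  (Y := Ka :&: Kb)); rewrite ?inE // ?subsetIr //.
by rewrite (subset_trans _ (matched_sub ma mb' le')) // setIS // (maxclique_sub mb).
Qed.

Lemma matched_union_sub Ka Kb : maxclique Sa Aa Ka -> maxclique Sb Ab Kb ->
  n.-1 <= #|Ka :&: Kb| -> (Ka :|: Kb) :&: Ab \subset Kb.
Proof. by move=> ma mb le; rewrite setIUl subUset (matched_sub ma mb le) subsetIl. Qed.

Lemma matched_union_meet Ka Kb L : maxclique Sa Aa Ka -> maxclique Sb Ab Kb ->
  n.-1 <= #|Ka :&: Kb| -> maxclique Sb Ab L -> Kb != L -> #|(Ka :|: Kb) :&: L| < n.-1.
Proof.
move=> ma mb le mL neqL; have sAb := matched_union_sub ma mb le.
have sKbL : (Ka :|: Kb) :&: L \subset Kb :&: L.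
  by rewrite subsetI subsetIr andbT (subset_trans (setIS _ (maxclique_sub mL)) sAb).
apply: leq_ltn_trans (subset_leq_card sKbL) _.
by apply: (geometric_small_meets n_gt0 geob); rewrite ?inE.
Qed.

End Matching.

Lemma covered_amalg n (T : finType) (Aa Ab K : {set T}) (Sa Sb : pred (n.-tuple T)) :
  0 < n -> geometric Sa Aa -> agree_on (Aa :&: Ab) Sa Sb -> K \subset Aa -> n <= #|K| ->
  covered (amalg_cliques Aa Sa Ab Sb) K = covered (maxcliques Sa Aa) K.
Proof.
move=> n_gt0 geoa agree sKA nK; apply/coveredP/coveredP.
- case=> L /amalg_cliquesP[Ka Kb ma mb le -> | ma _ | mb _] sKL.
  + exists Ka; rewrite ?inE //; apply/subsetP => x xK.
    move: (subsetP sKL x xK); rewrite inE => /orP[// | xKb].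
    have sKbAa : Kb :&: Aa \subset Ka.
      by apply: (matched_sub n_gt0 geoa (agree_onC agree) mb ma); rewrite setIC.
    by rewrite (subsetP sKbAa) // inE xKb (subsetP sKA).
  + by exists L; rewrite ?inE.
  + have sKB : K \subset Aa :&: Ab by rewrite subsetI sKA (subset_trans sKL (maxclique_sub mb)).
    have okK : complete Sa K.
      by rewrite (complete_agree agree sKB) (complete_sub sKL (maxclique_complete mb)).
    have [M mM sKM] : exists2 M, maxclique Sa Aa M & K \subset M.
      by apply: maxclique_exists; rewrite cliqueE sKA nK okK.
    by exists M; rewrite ?inE.
- case=> Ka; rewrite inE => ma sKKa.
  case: (boolP [exists Kb, maxclique Sb Ab Kb && (n.-1 <= #|Ka :&: Kb|)]).
    case/existsP => Kb /andP[mb le]; exists (Ka :|: Kb); first exact: amalg_cliques_union.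
    exact: subset_trans sKKa (subsetUl _ _).
  move=> nomatch; exists Ka => //; apply: amalg_cliques_left => // Kb mb.
  by rewrite ltnNge; apply: contra nomatch => le; apply/existsP; exists Kb; rewrite mb.
Qed.

Section Amalgamation.
Variables (n : nat) (T : finType).
Hypothesis n_gt0 : 0 < n.
Variables (A1 A2 : {set T}) (S1 S2 : pred (n.-tuple T)).
Hypotheses (geo1 : geometric S1 A1) (geo2 : geometric S2 A2).
Hypothesis agree : agree_on (A1 :&: A2) S1 S2.
Hypothesis leB : le_s S1 (A1 :&: A2) A1.
Implicit Types (K L X Y : {set T}).

Local Notation B := (A1 :&: A2).
Local Notation F := (amalg_cliques A1 S1 A2 S2).
Local Notation R := (amalgam A1 S1 A2 S2).
Local Notation sig := (sigma n F).
Local Notation mc1 := (maxclique S1 A1).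
Local Notation mc2 := (maxclique S2 A2).

Let agree21 := agree_onC agree.

Lemma amalg_clique_sub L : L \in F -> L \subset A1 :|: A2.
Proof.
case/amalg_cliquesP => [K1 K2 m1 m2 _ -> | m1 _ | m2 _].
- by apply: setUSS; apply: maxclique_sub; [exact: m1 | exact: m2].
- exact: subset_trans (maxclique_sub m1) (subsetUl _ _).
- exact: subset_trans (maxclique_sub m2) (subsetUr _ _).
Qed.

Lemma amalg_clique_card L : L \in F -> n <= #|L|.
Proof.
case/amalg_cliquesP => [K1 K2 m1 m2 _ -> | m1 _ | m2 _]; last 2 first.
- exact: maxclique_card m1.
- exact: maxclique_card m2.
by rewrite (leq_trans (maxclique_card m1)) // subset_leq_card // subsetUl.
Qed.

(* Adding the points P of K1 :&: K1' outside A2 to B raises s(B) by 2|P| but |B| only by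
   |P|, so B <= A1 forces P to be empty. *)
Lemma maxcliques1_meet_sub K1 K1' : mc1 K1 -> mc1 K1' -> K1 != K1' ->
  n.-1 <= #|K1 :&: A2| -> n.-1 <= #|K1' :&: A2| -> K1 :&: K1' \subset A2.
Proof.
move=> m1 m1' neqK c1 c1'; set P := (K1 :&: K1') :\: A2.
have sPK : P \subset K1 :&: K1' by apply: subsetDl.
have sPA1 : P \subset A1 := subset_trans sPK (subset_trans (subsetIl _ _) (maxclique_sub m1)).
have sYA1 : B :|: P \subset A1 by rewrite subUset subsetIl.
have dPB : [disjoint P & B].
  by rewrite -setI_eq0; apply/eqP/setP => x; rewrite !inE; case: (x \in A2); rewrite ?andbF.
have meetB K : mc1 K -> n.-1 <= #|K :&: A2| -> n.-1 <= #|K :&: B|.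
  by move=> mK cK; rewrite setIA (setIidPl (maxclique_sub mK)).
have grow : sigma n (maxcliques S1 A1) B + #|[set K1; K1']| * #|P| <=
    sigma n (maxcliques S1 A1) (B :|: P).
  apply: sigma_grow dPB _; first by rewrite subUset !sub1set !inE m1 m1'.
  move=> L; rewrite !inE => /orP[] /eqP ->; split; rewrite ?meetB //.
    exact: subset_trans sPK (subsetIl _ _).
  exact: subset_trans sPK (subsetIr _ _).
rewrite cards2 neqK /= -!s_fun_geometric ?subsetIl // in grow.
have := leB (subsetUl B P) sYA1; rewrite /delta.
have := cardsUI B P; rewrite [B :&: P]setIC (disjoint_setI0 dPB) cards0 addn0.
move=> cBP deltaB; have : #|P| == 0 by apply/eqP; lia.
by rewrite cards_eq0 setD_eq0.
Qed.

Lemma union_meet_union K1 K2 K1' K2' : mc1 K1 -> mc2 K2 -> mc1 K1' -> mc2 K2' ->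
  n.-1 <= #|K1 :&: K2| -> n.-1 <= #|K1' :&: K2'| -> K1 :|: K2 != K1' :|: K2' ->
  #|(K1 :|: K2) :&: (K1' :|: K2')| < n.-1.
Proof.
move=> m1 m2 m1' m2' le le' neqU.
have neq1 : K1 != K1'.
  apply: contraNneq neqU => eK1; rewrite -eK1 in m1' le' *.
  by rewrite (matched_uniq n_gt0 geo2 agree m1 m2 m2' le le').
have neq2 : K2 != K2'.
  apply: contraNneq neq1 => eK2; rewrite -eK2 in m2' le'.
  by apply/eqP; apply: (matched_uniq n_gt0 geo1 agree21 m2 m1 m1'); rewrite setIC.
have meetA2 K K' : mc2 K' -> n.-1 <= #|K :&: K'| -> n.-1 <= #|K :&: A2|.
  by move=> mK' leK; rewrite (leq_trans leK) // subset_leq_card // setIS // (maxclique_sub mK').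
have s11 := maxcliques1_meet_sub m1 m1' neq1 (meetA2 _ _ m2 le) (meetA2 _ _ m2' le').
have sUA2 : (K1 :|: K2) :&: (K1' :|: K2') \subset A2.
  apply/subsetP => x; rewrite !inE => /andP[/orP[x1 | x2] /orP[x1' | x2']].
  - by apply: (subsetP s11); rewrite inE x1.
  - exact: (subsetP (maxclique_sub m2')).
  - exact: (subsetP (maxclique_sub m2)).
  - exact: (subsetP (maxclique_sub m2)).
have sub : (K1 :|: K2) :&: (K1' :|: K2') \subset K2 :&: K2'.
  rewrite subsetI; apply/andP; split.
    apply: subset_trans (matched_union_sub n_gt0 geo2 agree m1 m2 le).
    by rewrite subsetI subsetIl sUA2.
  apply: subset_trans (matched_union_sub n_gt0 geo2 agree m1' m2' le').
  by rewrite subsetI subsetIr sUA2.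
apply: leq_ltn_trans (subset_leq_card sub) _.
by apply: (geometric_small_meets n_gt0 geo2); rewrite ?inE.
Qed.

Lemma union_meet K1 K2 L : mc1 K1 -> mc2 K2 -> n.-1 <= #|K1 :&: K2| ->
  L \in F -> K1 :|: K2 != L -> #|(K1 :|: K2) :&: L| < n.-1.
Proof.
move=> m1 m2 le; case/amalg_cliquesP => [K1' K2' m1' m2' le' -> | mL smL | mL smL] neqL.
- exact: union_meet_union.
- rewrite setUC; apply: (matched_union_meet n_gt0 geo1 agree21 m2 m1 _ mL).
    by rewrite setIC.
  by apply: contraTneq (smL _ m2) => <-; rewrite -leqNgt.
- apply: (matched_union_meet n_gt0 geo2 agree m1 m2 le mL).
  by apply: contraTneq (smL _ m1) => <-; rewrite setIC -leqNgt.
Qed.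

Lemma amalg_small_meets : small_meets n F.
Proof.
move=> L L' LF L'F; case/amalg_cliquesP: (LF) => [K1 K2 m1 m2 le -> | m1 sm1 | m2 sm2].
- exact: union_meet.
- case/amalg_cliquesP: L'F => [K1' K2' m1' m2' le' -> | m1' _ | m2' _] neqL.
  + by rewrite setIC union_meet // eq_sym.
  + by apply: (geometric_small_meets n_gt0 geo1); rewrite ?inE.
  + exact: sm1.
- case/amalg_cliquesP: L'F => [K1' K2' m1' m2' le' -> | m1' _ | m2' _] neqL.
  + by rewrite setIC union_meet // eq_sym.
  + exact: sm2.
  + by apply: (geometric_small_meets n_gt0 geo2); rewrite ?inE.
Qed.

Lemma amalg_clique_cover Y : clique_cover R Y F.
Proof. by apply: (clique_cover_of_rel n_gt0 Y amalg_small_meets) => t; apply: amalgamE. Qed.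

Lemma amalgam_maxcliqueE K : maxclique R (A1 :|: A2) K = (K \in F).
Proof.
rewrite (maxclique_cover amalg_small_meets (amalg_clique_cover _)); apply/exists_inP/idP.
  by case=> L LF /andP[_ /eqP ->]; rewrite (setIidPl (amalg_clique_sub LF)).
by move=> KF; exists K => //; rewrite (setIidPl (amalg_clique_sub KF)) amalg_clique_card /=.
Qed.

Lemma covered_amalg1 K : K \subset A1 -> n <= #|K| ->
  covered F K = covered (maxcliques S1 A1) K.
Proof. exact: covered_amalg n_gt0 geo1 agree. Qed.

Lemma covered_amalg2 K : K \subset A2 -> n <= #|K| ->
  covered F K = covered (maxcliques S2 A2) K.
Proof. by rewrite -amalg_cliquesC; exact: covered_amalg n_gt0 geo2 agree21. Qed.

Section Side.
Variables (A : {set T}) (S : pred (n.-tuple T)).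
Hypothesis geoS : geometric S A.
Hypothesis covA :
  forall K, K \subset A -> n <= #|K| -> covered F K = covered (maxcliques S A) K.

Lemma s_fun_side Y : Y \subset A -> s_fun S Y = sig Y.
Proof.
move=> sYA; rewrite -(s_fun_cover amalg_small_meets (amalg_clique_cover Y)).
apply: s_fun_cover_eq (clique_cover_maxcliques S sYA) (amalg_clique_cover Y) _ => K sKY nK.
by rewrite covA // (subset_trans sKY sYA).
Qed.

Lemma sigma_uncovered Y : Y \subset A -> n <= #|Y| -> ~~ covered F Y -> n + sig Y <= #|Y|.
Proof.
by move=> sYA nY; rewrite covA // -(s_fun_side sYA); apply: geometric_uncovered.
Qed.

Lemma sigma_side_bound Y : Y \subset A -> minn #|Y| n.-1 + sig Y <= #|Y|.
Proof.
move=> sYA; case: (leqP #|Y| n.-1) => [smallY | bigY].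
  by rewrite sigma_small // addn0.
have nY : n <= #|Y| by rewrite -(prednK n_gt0).
have [/coveredP[L LF sYL] | ncov] := boolP (covered F Y).
  by rewrite addnC (sigma_member n_gt0 amalg_small_meets LF sYL (ltnW bigY)).
by apply: leq_trans (sigma_uncovered sYA nY ncov); rewrite leq_add2r leq_pred.
Qed.

End Side.

Lemma amalg_clique_meet_small L : L \in F -> #|L :&: B| < n.-1 ->
  (L \subset A1) || (L \subset A2).
Proof.
case/amalg_cliquesP => [K1 K2 m1 m2 le -> | m1 _ | m2 _] smallL; last 2 first.
- by rewrite (maxclique_sub m1).
- by rewrite (maxclique_sub m2) orbT.
have : K1 :&: K2 \subset (K1 :|: K2) :&: B.
  rewrite subsetI (subset_trans (subsetIl _ _) (subsetUl _ _)).
  exact: setISS (maxclique_sub m1) (maxclique_sub m2).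
by move/subset_leq_card/(leq_trans le); rewrite leqNgt smallL.
Qed.

Lemma sigma_meet_B Y : Y \subset A1 -> #|Y :&: B| + sig Y <= #|Y| + sig (Y :&: B).
Proof.
move=> sYA1; rewrite -!(s_fun_side covered_amalg1) ?(subset_trans (subsetIl _ _) sYA1) //.
exact: (le_s_meet n_gt0 geo1 (subsetIl A1 A2) leB sYA1).
Qed.

Definition B_closed X := [forall L in F, (n.-1 <= #|L :&: X|) ==> (L :&: B \subset X)].

Lemma sigma_closed_submodular X : X \subset A1 :|: A2 -> B_closed X ->
  sig X + sig (X :&: B) <= sig (X :&: A1) + sig (X :&: A2).
Proof.
move=> sXD /forall_inP clX.
have eU : (X :&: A1) :|: (X :&: A2) = X by rewrite -setIUr; apply/setIidPl.
have eI : (X :&: A1) :&: (X :&: A2) = X :&: B by rewrite setIACA setIid.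
rewrite /sigma -!big_split; apply: leq_sum => L LF /=; rewrite /star.
have cU := cardsUI (L :&: (X :&: A1)) (L :&: (X :&: A2)).
rewrite -setIUr eU setIACA setIid eI in cU.
have le1 : #|L :&: (X :&: B)| <= #|L :&: (X :&: A1)|.
  by rewrite subset_leq_card // setIS // setIS // subsetIl.
have le2 : #|L :&: (X :&: B)| <= #|L :&: (X :&: A2)|.
  by rewrite subset_leq_card // setIS // setIS // subsetIr.
suff : [\/ #|L :&: X| <= n.-1, n.-1 <= #|L :&: (X :&: B)|,
           #|L :&: X| = #|L :&: (X :&: A1)| | #|L :&: X| = #|L :&: (X :&: A2)|].
  by case=> ?; lia.
case: (leqP #|L :&: X| n.-1) => [smallLX | bigLX]; first exact: Or41.
have sLB := implyP (clX L LF) (ltnW bigLX).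
case: (leqP n.-1 #|L :&: B|) => [bigLB | smallLB].
  by apply: Or42; rewrite setICA (setIidPr sLB).
have sLX (A : {set T}) : L \subset A -> #|L :&: X| = #|L :&: (X :&: A)|.
  by move=> sLA; rewrite setIA (setIidPl (subset_trans (subsetIl L X) sLA)).
by case/orP: (amalg_clique_meet_small LF smallLB) => /sLX; [apply: Or43 | apply: Or44].
Qed.

Lemma closed_bound X : X \subset A1 :|: A2 -> n <= #|X| -> ~~ covered F X -> B_closed X ->
  n + sig X <= #|X|.
Proof.
move=> sXD nX ncovX clX.
have [sXA1 | nsXA1] := boolP (X \subset A1).
  by apply: (sigma_uncovered geo1 covered_amalg1 sXA1 nX ncovX).
have [sXA2 | nsXA2] := boolP (X \subset A2).
  by apply: (sigma_uncovered geo2 covered_amalg2 sXA2 nX ncovX).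
have cX : #|X| + #|X :&: B| = #|X :&: A1| + #|X :&: A2|.
  by rewrite -(cardsUI (X :&: A1)) -setIUr (setIidPl sXD) setIACA setIid.
have sub := sigma_closed_submodular sXD clX.
have ltB (A A' : {set T}) : ~~ (X \subset A') -> X \subset A :|: A' ->
    #|X :&: A :&: A'| < #|X :&: A|.
  move=> /subsetPn[q qX qnA'] sXAA'; rewrite proper_card // properE subsetIl /=.
  have qA : q \in A by move: (subsetP sXAA' q qX); rewrite inE (negbTE qnA') orbF.
  by apply/subsetPn; exists q; rewrite !inE ?qX ?qA // (negbTE qnA').
have lt1 := ltB A1 A2 nsXA2 sXD; rewrite -setIA in lt1.
have sXD' : X \subset A2 :|: A1 by rewrite setUC.
have lt2 := ltB A2 A1 nsXA1 sXD'; rewrite -setIA [A2 :&: A1]setIC in lt2.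
have d1 := sigma_side_bound geo1 covered_amalg1 (subsetIr X A1).
have d2 := sigma_side_bound geo2 covered_amalg2 (subsetIr X A2).
have [smallB | bigB] := ltnP #|X :&: B| n.-1.
  by have := sigma_small n_gt0 F (ltnW smallB); lia.
have mB := sigma_meet_B (subsetIr X A1); rewrite -setIA (setIidPr (subsetIl A1 A2)) in mB.
have n1 : n <= #|X :&: A1| by lia.
have [/coveredP[L0 L0F sX2L0] | ncov2] := boolP (covered F (X :&: A2)); last first.
  have n2 : n <= #|X :&: A2| by lia.
  by have := sigma_uncovered geo2 covered_amalg2 (subsetIr X A2) n2 ncov2; lia.
have sXBL0 : X :&: B \subset L0 by rewrite (subset_trans _ sX2L0) // setIS // subsetIr.
have e2 := sigma_member n_gt0 amalg_small_meets L0F sX2L0 (ltnW (leq_ltn_trans bigB lt2)).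
have e0 := sigma_member n_gt0 amalg_small_meets L0F sXBL0 bigB.
have ncov1 : ~~ covered F (X :&: A1).
  apply: contra ncovX => /coveredP[L1 L1F sX1L1]; apply/coveredP; exists L0 => //.
  have sXBL1 : X :&: B \subset L1 by rewrite (subset_trans _ sX1L1) // setIS // subsetIl.
  have eL : L1 = L0 := small_meets_eq amalg_small_meets L1F L0F sXBL1 sXBL0 bigB.
  by rewrite -(setIidPl sXD) setIUr subUset sX2L0 -eL sX1L1.
by have := sigma_uncovered geo1 covered_amalg1 (subsetIr X A1) n1 ncov1; lia.
Qed.

Lemma uncovered_bound X : X \subset A1 :|: A2 -> n <= #|X| -> ~~ covered F X ->
  n + sig X <= #|X|.
Proof.
have [k] := ubnP #|(A1 :|: A2) :\: X|; elim: k X => // k IH X /ltnSE leXk sXD nX ncovX.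
have [clX | ] := boolP (B_closed X); first exact: closed_bound.
case/forall_inPn => L LF; rewrite negb_imply => /andP[bigLX /subsetPn[p pLB pnX]].
have [pL /setIP[pA1 _]] := setIP pLB.
have sXD' : p |: X \subset A1 :|: A2 by rewrite subUset sub1set inE pA1 sXD.
have IHp : n + sig (p |: X) <= #|p |: X|.
  apply: (IH _ _ sXD').
  - apply: leq_trans leXk; rewrite proper_card // properEneq setDS ?subsetUr // andbT.
    by apply/negP => /eqP/setP/(_ p); rewrite !inE eqxx pnX pA1.
  - exact: leq_trans nX (subset_leq_card (subsetUr _ _)).
  - apply: contra ncovX => /coveredP[L' L'F sL']; apply/coveredP; exists L' => //.
    exact: subset_trans (subsetUr _ _) sL'.
have grow : sig X + #|[set L]| * #|[set p]| <= sig (X :|: [set p]).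
  apply: sigma_grow; rewrite ?sub1set ?disjoints1 // => L'; rewrite inE => /eqP ->.
  by rewrite sub1set.
by move: IHp grow; rewrite cardsU1 pnX !cards1 setUC; lia.
Qed.

Lemma geometric_amalgam : geometric R (A1 :|: A2).
Proof.
move=> X sXD nX; rewrite delta_ltn (s_fun_cover amalg_small_meets (amalg_clique_cover X)).
have [/coveredP[L LF sXL] _ | ncovX] := boolP (covered F X).
  exists L; split; first by rewrite amalgam_maxcliqueE.
  move=> K [mK sXK]; rewrite amalgam_maxcliqueE in mK.
  exact: small_meets_eq amalg_small_meets LF mK sXL sXK (leq_trans (leq_pred n) nX).
by rewrite ltnNge uncovered_bound.
Qed.

End Amalgamation.

Lemma complete_arity0 (T : finType) (S : pred (0.-tuple T)) (K : {set T}) :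
  complete S K = S [tuple].
Proof.
by apply/forallP/idP => [/(_ [tuple]) // | S0 t]; rewrite tuple0 S0 implybT.
Qed.

Lemma geometric_arity0 (T : finType) (S : pred (0.-tuple T)) (A : {set T}) : geometric S A.
Proof.
move=> X sXA _; rewrite delta_ltn add0n.
have clique0 Y K : clique S Y K = (K \subset Y) && S [tuple].
  by rewrite cliqueE complete_arity0.
have [S0 _ | nS0] := boolP (S [tuple]); last first.
  by rewrite /s_fun big_pred0 // => K; rewrite /maxclique clique0 (negbTE nS0) andbF.
have maxE K : maxclique S A K = (K == A).
  rewrite /maxclique clique0 S0 andbT; apply/idP/eqP => [/andP[sKA /existsP noK] | ->].
    apply/eqP; rewrite eqEproper sKA; apply: contra_notN noK => ltKA.
    by exists A; rewrite clique0 subxx S0 ltKA.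
  rewrite subxx; apply/existsP => -[K' /andP[]]; rewrite clique0 => /andP[sK'A _].
  by rewrite properE sK'A andbF.
by exists A; split=> [|K []]; rewrite !maxE // => /eqP.
Qed.

Theorem mainTheorem1 (n : nat) (T : finType)
    (A1 A2 : {set T}) (S1 S2 : pred (n.-tuple T)) :
  is_structure A1 S1 -> is_structure A2 S2 ->
  geometric S1 A1 -> geometric S2 A2 ->
  (* B = A1 :&: A2 is a common induced substructure *)
  (forall t : n.-tuple T, all (fun x => x \in A1 :&: A2) t -> S1 t = S2 t) ->
  (* B <= A1 *)
  le_s S1 (A1 :&: A2) A1 ->
  geometric (amalgam A1 S1 A2 S2) (A1 :|: A2).
Proof.
move=> _ _ geo1 geo2 agree leB.
have [n0 | n_gt0] := posnP n; first by subst n; apply: geometric_arity0.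
exact: (geometric_amalgam n_gt0 geo1 geo2 agree leB).
Qed.
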